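(* Let $d\ge2$, $H\le\Sigma_d$, and $x\in A^\omega$. For the action of $V_d(H)$ on $A^\omega$, the germ group $G_x$ is isomorphic to $H_x$ if $x$ is not eventually periodic, and is isomorphic to a semidirect product $H_x\rtimes\mathbb Z$ if $x$ is eventually periodic.
   Context: $A=\{a_1,\dots,a_d\}$; $A^*$, $A^\omega$ are the finite and infinite words, $A^\omega$ with ultrametric $d(x,y)=e^{1-n}$, $n$ the first index where $x,y$ differ; balls are the sets $wA^\omega$, $w\in A^*$. $\Sigma_d$ acts letterwise on $A^\omega$. $V_d(H)$ is the group of homeomorphisms $g$ of $A^\omega$ such that every point lies in a ball $w_1A^\omega$ on which $g$ has the form $w_1y\mapsto w_2\sigma(y)$ for some $w_2\in A^*$, $\sigma\in H$. For a group $\Gamma$ acting on a space and a point $x$, $\Gamma_x$ is the stabilizer of $x$, $N_x\trianglelefteq\Gamma_x$ the subgroup of elements that are the identity on some open neighborhood of $x$, and the *germ group* is $G_x=\Gamma_x/N_x$. For $a\in A$, $H_a=\{\sigma\in H:\sigma(a)=a\}$; for $x=x_1x_2\dots$, the *eventual isotropy group* is $H_x=\bigcap\{H_a: a=x_i\text{ for infinitely many }i\}$. $x$ is *eventually periodic* if $x=u\bar v$ with $u,v\in A^*$, $v$ non-empty, $\bar v=vvv\cdots$. *)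

From HB Require Import structures.
From mathcomp Require Import all_boot all_order all_algebra all_fingroup.
Set Implicit Arguments. Unset Strict Implicit. Unset Printing Implicit Defensive.

(* Alphabet A = 'I_d; infinite words A^omega = nat -> 'I_d (x_1 is [x 0]);
   finite words A^* = seq 'I_d. *)
Definition word (d : nat) := nat -> 'I_d.

Definition app d (w : seq 'I_d) (y : word d) : word d :=
  fun n => if n < size w then nth (y 0) w n else y (n - size w).

Definition actw d (s : {perm 'I_d}) (y : word d) : word d := fun n => s (y n).

(* x and y agree on the first n letters, i.e. d(x,y) <= e^{-n}, i.e. y lies
   in the ball (x_1..x_n) A^omega *)
Definition agree d (x y : word d) (n : nat) : Prop := forall i, i < n -> x i = y i.

Definition in_ball d (w : seq 'I_d) (z : word d) : Prop :=
  forall i, i < size w -> z i = nth (z 0) w i.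

(* continuity for the ultrametric d(x,y) = e^{1-n} *)
Definition continuous_w d (g : word d -> word d) : Prop :=
  forall x n, exists m, forall y, agree x y m -> agree (g x) (g y) n.

Definition homeo d (g : word d -> word d) : Prop :=
  exists ginv, cancel g ginv /\ cancel ginv g /\ continuous_w g /\ continuous_w ginv.

Definition inV d (H : {group {perm 'I_d}}) (g : word d -> word d) : Prop :=
  homeo g /\
  forall z, exists (w1 w2 : seq 'I_d) (s : {perm 'I_d}),
    s \in H /\ in_ball w1 z /\ forall y, g (app w1 y) = app w2 (actw s y).

Definition inGamma d (H : {group {perm 'I_d}}) (x : word d) (g : word d -> word d) : Prop :=
  inV H g /\ g x = x.

Definition inN d (H : {group {perm 'I_d}}) (x : word d) (g : word d -> word d) : Prop :=
  inGamma H x g /\ exists n, forall y, agree x y n -> g y = y.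

Definition inf_often d (x : word d) (a : 'I_d) : Prop :=
  forall N, exists i, N <= i /\ x i = a.

Definition inHx d (H : {group {perm 'I_d}}) (x : word d) (s : {perm 'I_d}) : Prop :=
  s \in H /\ forall a, inf_often x a -> s a = a.

Definition periodic_word d (v : seq 'I_d) (dflt : 'I_d) : word d :=
  fun n => nth dflt v (n %% size v).

Definition eventually_periodic d (x : word d) : Prop :=
  exists u v : seq 'I_d, 0 < size v /\ x = app u (periodic_word v (x 0)).

(* The germ group G_x = Gamma_x / N_x is isomorphic to a group (K, mul, one)
   described by a carrier predicate inK: there is a homomorphism from Gamma_x
   (with composition) onto K whose kernel is N_x. *)
Definition germ_iso d (H : {group {perm 'I_d}}) (x : word d)
    (K : Type) (inK : K -> Prop) (mul : K -> K -> K) (one : K) : Prop :=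
  exists phi : (word d -> word d) -> K,
    (forall g, inGamma H x g -> inK (phi g)) /\
    (forall k, inK k -> exists g, inGamma H x g /\ phi g = k) /\
    (forall g h, inGamma H x g -> inGamma H x h ->
        phi (fun y => g (h y)) = mul (phi g) (phi h)) /\
    (forall g, inGamma H x g -> (phi g = one <-> inN H x g)).

Definition is_aut_Hx d (H : {group {perm 'I_d}}) (x : word d)
    (alpha alphai : {perm 'I_d} -> {perm 'I_d}) : Prop :=
  (forall h, inHx H x h -> inHx H x (alpha h)) /\
  (forall h, inHx H x h -> inHx H x (alphai h)) /\
  (forall h, inHx H x h -> alpha (alphai h) = h) /\
  (forall h, inHx H x h -> alphai (alpha h) = h) /\
  (forall h k, inHx H x h -> inHx H x k -> alpha (h * k)%g = (alpha h * alpha k)%g).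

Definition zact d (alpha alphai : {perm 'I_d} -> {perm 'I_d}) (n : int)
    (h : {perm 'I_d}) : {perm 'I_d} :=
  match n with
  | Posz k => iter k alpha h
  | Negz k => iter k.+1 alphai h
  end.

Definition sd_mul d (alpha alphai : {perm 'I_d} -> {perm 'I_d})
    (p q : {perm 'I_d} * int) : {perm 'I_d} * int :=
  ((p.1 * zact alpha alphai p.2 q.1)%g, (p.2 + q.2)%R).

From HB Require Import structures.
From mathcomp Require Import all_boot all_order all_algebra all_fingroup.
From mathcomp Require Import zify.
From Stdlib Require Import FunctionalExtensionality ClassicalEpsilon Classical.
Set Implicit Arguments. Unset Strict Implicit. Unset Printing Implicit Defensive.
Import GRing.Theory Num.Theory.

(* An element g of the stabilizer Gamma_x acts near x as
   x_1..x_N y |-> x_1..x_M s(y) with s in H.  Since d >= 2, the pair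
   germ g = (s^-1, N - M) in Sigma_d x Z does not depend on this prefix
   representation, and it is a "tail symmetry" of x: a pair (t, k), t in H,
   such that t carries a tail of x onto the tail starting k letters later.
   The germ map is a homomorphism from Gamma_x onto the tail symmetries
   (every tail symmetry is realized by an explicit piecewise
   prefix-replacement map) with kernel N_x, so G_x is the group of tail
   symmetries, whose shift-0 part is H_x.  If x is not eventually periodic
   all shifts vanish and G_x ~ H_x; otherwise the shifts form a subgroup mZ,
   m > 0, and a symmetry (b, -m) splits off a copy of Z acting on H_x by
   conjugation by b, so G_x ~ H_x >< Z. *)

Section Words.
Variable d : nat.
Implicit Types (x y z : word d) (w u v c : seq 'I_d) (s : {perm 'I_d}).

Definition pref n z : seq 'I_d := mkseq z n.
Definition shift n z : word d := fun i => z (i + n).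
Definition splice n x y : word d := fun i => if i < n then x i else y (i - n).

Definition inb w z : bool := pref (size w) z == w.

Lemma size_pref n z : size (pref n z) = n.
Proof. exact: size_mkseq. Qed.

Lemma nth_pref a n z i : i < n -> nth a (pref n z) i = z i.
Proof. exact: nth_mkseq. Qed.

Lemma app_pref n x y : app (pref n x) y = splice n x y.
Proof.
apply: functional_extensionality => i; rewrite /app /splice size_pref.
by case: ifP => // hi; rewrite nth_pref.
Qed.

Lemma inbP w z : reflect (in_ball w z) (inb w z).
Proof.
apply: (iffP eqP) => [<- i hi | h].
  by rewrite size_pref in hi *; rewrite nth_pref.
apply: (@eq_from_nth _ (z 0)); first by rewrite size_pref.
by move=> i; rewrite size_pref => hi; rewrite nth_pref // h.
Qed.

Lemma inb_pref_eq w z : inb w z -> pref (size w) z = w.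
Proof. by move/eqP. Qed.

Lemma inb_pref_self n z : inb (pref n z) z.
Proof. by rewrite /inb size_pref. Qed.

Lemma app_shift w z : inb w z -> app w (shift (size w) z) = z.
Proof.
move/inbP=> h; apply: functional_extensionality => n; rewrite /app /shift.
case: ifP => hn; first by rewrite (h n hn); apply: set_nth_default.
by congr z; lia.
Qed.

Lemma shift_app n w y : n <= size w -> shift n (app w y) = app (drop n w) y.
Proof.
move=> hn; apply: functional_extensionality => i; rewrite /shift /app size_drop.
rewrite nth_drop; case: ifP => h1; case: ifP => h2; try lia.
  by rewrite addnC; apply: set_nth_default; lia.
by congr y; lia.
Qed.

Lemma app_nil y : app [::] y = y.
Proof. by apply: functional_extensionality => n; rewrite /app /= subn0. Qed.

Lemma shift_app_size w y : shift (size w) (app w y) = y.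
Proof. by rewrite shift_app // drop_size app_nil. Qed.

Lemma app_cat w1 w2 y : app (w1 ++ w2) y = app w1 (app w2 y).
Proof.
apply: functional_extensionality => n; rewrite /app size_cat nth_cat.
case: (ltnP n (size w1)) => h1.
  by rewrite ifT; [apply: set_nth_default | lia].
case: (ltnP n (size w1 + size w2)) => h2.
  by rewrite ifT; [apply: set_nth_default; lia | lia].
by rewrite ifF; [congr y; lia | lia].
Qed.

Lemma actw_app s w y : actw s (app w y) = app (map s w) (actw s y).
Proof.
apply: functional_extensionality => n; rewrite /actw /app size_map.
by case: ifP => h //; rewrite (nth_map (y 0)).
Qed.

Lemma actw1 y : actw 1%g y = y.
Proof. by apply: functional_extensionality => n; rewrite /actw perm1. Qed.

Lemma actwM s t y : actw s (actw t y) = actw (t * s)%g y.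
Proof. by apply: functional_extensionality => n; rewrite /actw permM. Qed.

Lemma actwK s : cancel (actw s) (actw s^-1).
Proof. by move=> y; rewrite actwM mulgV actw1. Qed.

Lemma actwKV s : cancel (actw s^-1) (actw s).
Proof. by move=> y; rewrite actwM mulVg actw1. Qed.

Lemma inb_app w w1 y : size w <= size w1 -> inb w (app w1 y) = (take (size w) w1 == w).
Proof.
move=> hw; congr (_ == _); apply: (@eq_from_nth _ (y 0)).
  by rewrite size_pref size_takel.
move=> i; rewrite size_pref => hi; rewrite nth_pref // nth_take // /app ifT //; lia.
Qed.

Lemma inb_app_self w y : inb w (app w y).
Proof. by rewrite inb_app // take_size. Qed.

Lemma inb_app_pref w n z y : size w <= n -> inb w (app (pref n z) y) = inb w z.
Proof.
move=> hw; rewrite inb_app ?size_pref //; congr (_ == _).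
apply: (@eq_from_nth _ (z 0)); first by rewrite size_takel ?size_pref.
by move=> i; rewrite size_takel ?size_pref // => hi; rewrite nth_take // !nth_pref //; lia.
Qed.

Lemma inb_cat_app w1 w2 y : inb (w1 ++ w2) (app w1 y) = inb w2 y.
Proof.
apply/inbP/inbP => h i hi.
  have := h (size w1 + i); rewrite size_cat nth_cat ifF; last lia.
  rewrite addKn /app ifF; last lia.
  by rewrite addKn => ->; [apply: set_nth_default | lia].
move: hi; rewrite size_cat nth_cat /app => hi.
case: ifP => h1; first exact: set_nth_default.
by rewrite h; [apply: set_nth_default | ]; lia.
Qed.

Lemma inb_catl w1 w2 z : inb (w1 ++ w2) z -> inb w1 z.
Proof.
move/inbP=> h; apply/inbP => i hi; rewrite h ?size_cat; last lia.
by rewrite nth_cat hi.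
Qed.

End Words.

Section PiecewiseMaps.
Variable d : nat.
Implicit Types (x y z : word d) (w u v c : seq 'I_d) (s : {perm 'I_d}).

Definition local_form (P : {set {perm 'I_d}}) (g : word d -> word d) : Prop :=
  forall z, exists w1 w2 s, s \in P /\ in_ball w1 z /\
    forall y, g (app w1 y) = app w2 (actw s y).

Lemma local_form_continuous P g : local_form P g -> continuous_w g.
Proof.
move=> hg x n; have [w1 [w2 [s [_ [hb he]]]]] := hg x.
exists (size w1 + n) => y hxy.
have hby : inb w1 y.
  apply/inbP => i hi; rewrite -hxy; last lia.
  by rewrite (hb i hi); apply: set_nth_default.
move/inbP: hb => hb.
rewrite -(app_shift hb) -(app_shift hby) !he => i hi; rewrite /app /actw.
by case: ifP => // hi2; rewrite /shift hxy //; lia.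
Qed.

Lemma local_form_inV (H : {group {perm 'I_d}}) g ginv :
  local_form H g -> local_form H ginv -> cancel g ginv -> cancel ginv g -> inV H g.
Proof.
move=> hg hginv gK ginvK; split; last exact: hg.
exists ginv; do !split=> //; exact: local_form_continuous.
Qed.

Definition clause := (seq 'I_d * seq 'I_d * {perm 'I_d})%type.

Fixpoint piecewise (cl : seq clause) z : word d :=
  if cl is (w, w', s) :: cl' then
    if inb w z then app w' (actw s (shift (size w) z)) else piecewise cl' z
  else z.

Lemma piecewise_first w w' s cl z : inb w z ->
  piecewise ((w, w', s) :: cl) z = app w' (actw s (shift (size w) z)).
Proof. by move=> /= ->. Qed.

Lemma piecewise_on_ball (P : {set {perm 'I_d}}) cl K z :
  1%g \in P -> all (fun c : clause => (size c.1.1 <= K) && (c.2 \in P)) cl ->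
  exists w2 s, s \in P /\ forall y, piecewise cl (app (pref K z) y) = app w2 (actw s y).
Proof.
move=> P1; elim: cl => [_ | [[w w'] s] cl IH /= /andP [/andP [hw hs] hcl]].
  by exists (pref K z), 1%g; split=> // y; rewrite actw1.
case: (boolP (inb w z)) => hz.
  exists (w' ++ map s (drop (size w) (pref K z))), s; split=> // y.
  by rewrite /= inb_app_pref // hz shift_app ?size_pref // actw_app app_cat.
have [w2 [t [ht he]]] := IH hcl; exists w2, t; split=> // y.
by rewrite /= inb_app_pref // (negbTE hz).
Qed.

Lemma piecewise_local_form (P : {set {perm 'I_d}}) cl :
  1%g \in P -> all (fun c : clause => c.2 \in P) cl -> local_form P (piecewise cl).
Proof.
move=> P1 hcl z; set K := \sum_(c <- cl) size c.1.1.
have [w2 [s [hs he]]] : exists w2 s, s \in P /\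
    forall y, piecewise cl (app (pref K z) y) = app w2 (actw s y).
  apply: piecewise_on_ball => //; apply/allP => c hc; rewrite (allP hcl) // andbT.
  by rewrite /K (big_rem c) //= leq_addr.
by exists (pref K z), w2, s; split=> //; split=> //; apply/inbP/inb_pref_self.
Qed.

(* Given disjoint balls uA^omega and cA^omega and a word v, [contract]
   maps uvA^omega onto uA^omega (applying s letterwise), the rest of
   uA^omega onto c(A^omega - vA^omega) and cA^omega onto cvA^omega;
   [expand] is its inverse. *)
Definition contract u c v s :=
  piecewise [:: (u ++ v, u, s); (u, c, 1%g); (c, c ++ v, 1%g)].
Definition expand u c v s :=
  piecewise [:: (u, u ++ v, s); (c ++ v, c, 1%g); (c, u, 1%g)].

Section ContractExpand.
Variables u c v : seq 'I_d.
Hypothesis disj : forall z, inb u z -> inb c z -> False.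

Lemma notinb_u_app_c y : inb u (app c y) = false.
Proof. by apply/negP => hu; apply: (disj hu); apply: inb_app_self. Qed.

Lemma contractK s : cancel (contract u c v s) (expand u c v s^-1).
Proof.
move=> z; rewrite /contract /expand /=.
case h1: (inb (u ++ v) z).
  by rewrite inb_app_self shift_app_size actwK app_shift.
rewrite actw1; case h2: (inb u z).
  rewrite notinb_u_app_c inb_cat_app actw1.
  have -> : inb v (shift (size u) z) = false by rewrite -(app_shift h2) inb_cat_app in h1.
  by rewrite inb_app_self shift_app_size actw1 app_shift.
case h3: (inb c z); last by rewrite h2 h3 /=; case: ifP => // /inb_catl; rewrite h3.
rewrite !actw1 app_cat notinb_u_app_c -app_cat inb_app_self shift_app_size.
by rewrite app_shift.
Qed.

Lemma expandK s : cancel (expand u c v s^-1) (contract u c v s).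
Proof.
move=> z; rewrite /contract /expand /=.
case h1: (inb u z).
  by rewrite inb_app_self shift_app_size actwKV app_shift.
rewrite actw1; case h2: (inb (c ++ v) z).
  have -> : inb (u ++ v) (app c (shift (size (c ++ v)) z)) = false.
    by apply/negP => /inb_catl; rewrite notinb_u_app_c.
  by rewrite notinb_u_app_c inb_app_self actw1 shift_app_size app_shift.
case h3: (inb c z); last by rewrite h1 h3 /=; case: ifP => // /inb_catl; rewrite h1.
rewrite inb_cat_app inb_app_self !actw1 shift_app_size.
have -> : inb v (shift (size c) z) = false by rewrite -(app_shift h3) inb_cat_app in h2.
by rewrite app_shift.
Qed.

End ContractExpand.

Lemma contract_inV (H : {group {perm 'I_d}}) u c v s :
  (forall z, inb u z -> inb c z -> False) -> s \in H -> inV H (contract u c v s).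
Proof.
move=> disj hs; apply: (local_form_inV _ _ (contractK v disj s) (expandK v disj s)).
  by apply: piecewise_local_form; rewrite /= ?hs ?group1.
by apply: piecewise_local_form; rewrite /= ?groupV ?hs ?group1.
Qed.

Lemma expand_inV (H : {group {perm 'I_d}}) u c v s :
  (forall z, inb u z -> inb c z -> False) -> s \in H -> inV H (expand u c v s).
Proof.
move=> disj hs; rewrite -[s]invgK.
apply: (local_form_inV _ _ (expandK v disj s^-1) (contractK v disj s^-1)).
  by apply: piecewise_local_form; rewrite /= ?invgK ?hs ?group1.
by apply: piecewise_local_form; rewrite /= ?groupV ?hs ?group1.
Qed.

End PiecewiseMaps.

Section PrefixRepresentations.
Variables (d : nat) (x : word d).
Implicit Types (y z : word d) (w : seq 'I_d) (s t : {perm 'I_d}).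

Definition tail_match s N M := forall i, x (M + i) = s (x (N + i)).

Definition prefix_rep (g : word d -> word d) s N M :=
  forall y, g (splice N x y) = splice M x (actw s y).

Lemma tail_match_add s N M k : tail_match s N M -> tail_match s (N + k) (M + k).
Proof. by move=> h i; rewrite -!addnA h. Qed.

Lemma tail_match_inv s N M : tail_match s N M -> tail_match s^-1 M N.
Proof. by move=> h i; rewrite h permK. Qed.

Lemma tail_match_comp s1 N1 M1 s2 N2 M2 : tail_match s1 N1 M1 -> tail_match s2 N2 M2 ->
  tail_match (s1 * s2) (N1 + N2) (M2 + M1).
Proof.
by move=> h1 h2 i; rewrite permM -[N1 + N2 + i]addnA -h1 addnCA -h2 addnA.
Qed.

Lemma splice_split a b y : splice (a + b) x y = splice a x (splice b (shift a x) y).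
Proof.
apply: functional_extensionality => n; rewrite /splice /shift.
case: ifP => h1; case: ifP => h2 //; try lia.
  by rewrite ifT; [congr x; lia | lia].
by rewrite ifF; [congr y; lia | lia].
Qed.

Lemma splice_tail_match s N M K y : tail_match s N M ->
  splice M x (actw s (splice K (shift N x) y)) = splice (M + K) x (actw s y).
Proof.
move=> hm; apply: functional_extensionality => n; rewrite /splice /shift /actw.
case: ifP => h1; case: ifP => h2 //; try lia.
  rewrite ifT; last lia.
  have -> : n = M + (n - M) by lia.
  by rewrite hm; congr (s (x _)); lia.
by rewrite ifF; [congr (s (y _)); lia | lia].
Qed.

Lemma splice_shift N : splice N x (shift N x) = x.
Proof.
apply: functional_extensionality => n; rewrite /splice /shift.
by case: ifP => // h; congr x; lia.
Qed.

Lemma prefix_rep_fixP g s N M : prefix_rep g s N M -> g x = x <-> tail_match s N M.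
Proof.
move=> hr; rewrite -{1}(splice_shift N) hr; split=> [hx i | hm].
  have := f_equal (fun w : word d => w (M + i)) hx.
  by rewrite /splice /shift /actw ifF; [move=> <-; congr (s (x _)); lia | lia].
apply: functional_extensionality => n; rewrite /splice /shift /actw.
case: ifP => // h; have -> : n = M + (n - M) by lia.
by rewrite hm; congr (s (x _)); lia.
Qed.

(* Prefix representations compose (the tail match of the inner map lets the
   prefixes line up). *)
Lemma prefix_rep_comp g h sg Ng Mg sh Nh Mh :
  prefix_rep g sg Ng Mg -> tail_match sg Ng Mg ->
  prefix_rep h sh Nh Mh -> tail_match sh Nh Mh ->
  prefix_rep (fun y => g (h y)) (sh * sg) (Nh + Ng) (Mg + Mh).
Proof.
move=> rg mg rh mh y; rewrite [splice (Nh + Ng) _ _]splice_split rh splice_tail_match //.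
by rewrite addnC splice_split rg splice_tail_match // actwM.
Qed.

Lemma prefix_rep_eval g s N M : prefix_rep g s N M ->
  forall K y i, g (splice (N + K) x y) (M + K + i) = s (y i).
Proof.
move=> hr K y i; rewrite splice_split hr /splice /actw ifF; last lia.
by rewrite ifF; [congr (s (y _)); lia | lia].
Qed.

Lemma letters_independent (s1 s2 : {perm 'I_d}) k : 1 < d -> 0 < k ->
  ~ (forall y : word d, s1 (y k) = s2 (y 0)).
Proof.
move=> hd hk hy; pose a : 'I_d := Ordinal (ltnW hd); pose b : 'I_d := Ordinal hd.
have := hy (fun i => if i == 0 then a else a); have := hy (fun i => if i == 0 then a else b).
have -> : (k == 0) = false by lia.
by move=> /= <- /perm_inj /eqP.
Qed.

Lemma prefix_rep_unique g s N M s' N' M' : 1 < d ->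
  prefix_rep g s N M -> prefix_rep g s' N' M' -> s = s' /\ N + M' = N' + M.
Proof.
move=> hd r r'.
have E : forall y i j, M + N' + i = M' + N + j -> s (y i) = s' (y j).
  by move=> y i j hij; rewrite -(prefix_rep_eval r N') -(prefix_rep_eval r' N) hij addnC.
have hNM : M + N' = M' + N.
  case: (ltngtP (M + N') (M' + N)) => // h; exfalso.
    apply: (letters_independent (k := M' + N - (M + N')) hd); first lia.
    by move=> y; apply: E; lia.
  apply: (letters_independent (s1 := s') (s2 := s) (k := M + N' - (M' + N)) hd); first lia.
  by move=> y; symmetry; apply: E; lia.
split; last lia.
by apply/permP => e; apply: (E (fun _ => e) 0 0); rewrite hNM.
Qed.

Lemma inGamma_prefix_rep (H : {group {perm 'I_d}}) g :
  inGamma H x g -> exists s N M, s \in H /\ prefix_rep g s N M.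
Proof.
move=> [[_ hl] hx]; have [w1 [w2 [s [hs [/inbP hb he]]]]] := hl x.
have hb2 : inb w2 x by rewrite -hx -(app_shift hb) he inb_app_self.
exists s, (size w1), (size w2); split=> // y.
by rewrite -!app_pref !inb_pref_eq.
Qed.

Lemma inN_prefix_rep (H : {group {perm 'I_d}}) g :
  inGamma H x g -> inN H x g <-> exists N, prefix_rep g 1 N N.
Proof.
move=> hg; split=> [[_ [n hn]] | [N hN]].
  by exists n => y; rewrite actw1; apply: hn => i hi; rewrite /splice hi.
split=> //; exists N => y hy.
have -> : y = splice N x (shift N y).
  apply: functional_extensionality => n; rewrite /splice /shift.
  by case: ifP => h; [rewrite hy | congr y; lia].
by rewrite hN actw1.
Qed.

Definition segment a k : seq 'I_d := mkseq (fun i => x (a + i)) k.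

Lemma pref_cat a k : pref a x ++ segment a k = pref (a + k) x.
Proof.
apply: (@eq_from_nth _ (x 0)); first by rewrite size_cat !size_mkseq.
move=> i; rewrite size_cat !size_mkseq => hi; rewrite nth_cat size_mkseq.
rewrite [RHS]nth_mkseq //; case: ifP => h; first by rewrite nth_mkseq.
by rewrite nth_mkseq; [congr x; lia | lia].
Qed.

(* It contracts (N >= M) or expands (N < M) the ball around x, passing
   through the ball cA^omega of a letter c different from x_1. *)
Lemma tail_match_realize (H : {group {perm 'I_d}}) s N M : 1 < d -> s \in H ->
  tail_match s N M -> exists g, inGamma H x g /\ prefix_rep g s N.+1 M.+1.
Proof.
move=> hd hs hm.
pose b : 'I_d := if x 0 == Ordinal (ltnW hd) then Ordinal hd else Ordinal (ltnW hd).
have hb : b != x 0.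
  by rewrite /b; case: (x 0 =P Ordinal (ltnW hd)) => [-> | /eqP]; rewrite // eq_sym.
have disj : forall K, 0 < K -> forall z, inb (pref K x) z -> inb [:: b] z -> False.
  move=> K hK z /inbP h1 /inbP h2; move: (h1 0); rewrite size_pref nth_pref // => /(_ hK).
  by move: (h2 0 erefl) => /= -> /eqP; rewrite (negbTE hb).
suff [g [hV hr]] : exists g, inV H g /\ prefix_rep g s N.+1 M.+1.
  exists g; split=> //; split=> //; apply/(prefix_rep_fixP hr).
  by rewrite -[N.+1]addn1 -[M.+1]addn1; apply: tail_match_add.
case: (leqP M N) => hMN.
  exists (contract (pref M.+1 x) [:: b] (segment M.+1 (N - M)) s); split.
    by apply: contract_inV => //; apply: disj.
  move=> y; rewrite -!app_pref (_ : N.+1 = M.+1 + (N - M)) -?pref_cat; last lia.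
  by rewrite /contract piecewise_first ?inb_app_self // shift_app_size.
exists (expand (pref N.+1 x) [:: b] (segment N.+1 (M - N)) s); split.
  by apply: expand_inV => //; apply: disj.
move=> y; rewrite -!app_pref (_ : M.+1 = N.+1 + (M - N)) -?pref_cat; last lia.
by rewrite /expand piecewise_first ?inb_app_self // shift_app_size app_cat.
Qed.

End PrefixRepresentations.

Section Periodicity.
Variables (d : nat) (x : word d).

Lemma periodic_from M p : 0 < p -> (forall i, x (M + p + i) = x (M + i)) ->
  eventually_periodic x.
Proof.
move=> hp hper.
have hk : forall k i, x (M + k * p + i) = x (M + i).
  elim=> [|k IH] i; first by rewrite mul0n addn0.
  have -> : M + k.+1 * p + i = M + p + (k * p + i) by rewrite mulSn; lia.
  by rewrite hper addnA IH.
exists (pref M x), (segment x M p); split; first by rewrite size_mkseq.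
apply: functional_extensionality => n; rewrite /app size_pref /periodic_word size_mkseq.
case: ifP => h; first by rewrite nth_pref.
rewrite nth_mkseq ?ltn_pmod // -(hk ((n - M) %/ p)); congr x.
by have := divn_eq (n - M) p; lia.
Qed.

(* A tail match with a nontrivial shift forces x to be eventually periodic:
   the shift composed order(s) times is a period. *)
Lemma tail_match_periodic s N M : tail_match x s N M -> M < N -> eventually_periodic x.
Proof.
move=> hm hlt; set e := N - M.
have step : forall i, x (M + e + i) = (s^-1)%g (x (M + i)).
  by move=> i; rewrite hm permK; congr x; lia.
have hk : forall k i, x (M + k * e + i) = ((s^-1) ^+ k)%g (x (M + i)).
  elim=> [|k IH] i; first by rewrite mul0n addn0 expg0 perm1.
  have -> : M + k.+1 * e + i = M + e + (k * e + i) by rewrite mulSn; lia.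
  by rewrite expgSr permM -IH step addnA.
apply: (@periodic_from M (#[s^-1]%g * e)); first by rewrite muln_gt0 order_gt0 /e; lia.
by move=> i; rewrite hk expg_order perm1.
Qed.

Lemma periodic_tail_match : eventually_periodic x -> exists N M, M < N /\ tail_match x 1 N M.
Proof.
move=> [u [v [hv hx]]]; exists (size u + size v), (size u); split; first lia.
move=> i; rewrite perm1 hx /app ifF; last lia; rewrite ifF; last lia.
rewrite /periodic_word; congr nth; rewrite -addnA !(addnC (size u)) !addnK.
by rewrite modnDl.
Qed.

End Periodicity.

Section TailSymmetries.
Variables (d : nat) (H : {group {perm 'I_d}}) (x : word d).
Implicit Types (s t : {perm 'I_d}) (p q : {perm 'I_d} * int).
Local Open Scope ring_scope.

(* The pairs (t, k), t in H, such that t carries a tail of x onto the tail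
   of x starting k letters later; they form a subgroup of Sigma_d x Z that
   will turn out to be isomorphic to the germ group. *)
Definition tail_sym p : Prop :=
  p.1 \in H /\ exists N M : nat, p.2 = N%:Z - M%:Z /\ tail_match x p.1^-1 N M.

Definition pair_mul p q : {perm 'I_d} * int := ((p.1 * q.1)%g, p.2 + q.2).

Lemma tail_sym_one : tail_sym (1%g, 0).
Proof.
split; first exact: group1.
by exists 0%N, 0%N; split=> // i; rewrite invg1 perm1.
Qed.

Lemma tail_sym_mul p q : tail_sym p -> tail_sym q -> tail_sym (pair_mul p q).
Proof.
move=> [hp [N1 [M1 [e1 m1]]]] [hq [N2 [M2 [e2 m2]]]]; split; first exact: groupM.
exists (N2 + N1)%N, (M1 + M2)%N; split; first by rewrite /= e1 e2 {m1 m2}; lia.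
by rewrite /= invMg; apply: tail_match_comp.
Qed.

Lemma tail_sym_inv p : tail_sym p -> tail_sym (p.1^-1%g, - p.2).
Proof.
move=> [hp [N [M [e m]]]]; split; first by rewrite groupV.
exists M, N; split; first by rewrite /= e {m}; lia.
by rewrite /= invgK -[p.1]invgK; apply: tail_match_inv.
Qed.

Lemma tail_sym0P t : tail_sym (t, 0) <-> inHx H x t.
Proof.
split=> [[ht [N [M [e m]]]] | [ht hfix]].
  have eNM : N = M by move: e {m} => /=; lia.
  subst M; split=> // a ha; have [i [hi <-]] := ha N.
  by apply: (@perm_inj _ t^-1); rewrite permK -(subnKC hi) -m.
have bound : forall a, exists n, ~ inf_often x a -> forall i, (n <= i)%N -> x i != a.
  move=> a; case: (classic (inf_often x a)) => ha; first by exists 0%N.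
  apply: NNPP => hne; apply: ha => N; apply: NNPP => hNo; apply: hne.
  by exists N => _ i hi; apply/eqP => e; apply: hNo; exists i.
have [Na hNa] := fin_all_exists bound.
split=> //; exists (\max_a Na a)%N, (\max_a Na a)%N; split; first by rewrite subrr.
move=> i; set a := x _; case: (classic (inf_often x a)) => ha.
  by rewrite /= -{2}(hfix a ha) permK.
have hi : (Na a <= \max_b Na b + i)%N := leq_trans (leq_bigmax a) (leq_addr _ _).
by have := hNa a ha _ hi; rewrite eqxx.
Qed.

Lemma tail_sym_aperiodic p : ~ eventually_periodic x -> tail_sym p -> p.2 = 0.
Proof.
move=> hx [_ [N [M [-> m]]]]; apply/eqP; rewrite subr_eq0 eqz_nat.
case: (ltngtP M N) => // hlt; exfalso; apply: hx.
  exact: tail_match_periodic m hlt.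
exact: tail_match_periodic (tail_match_inv m) hlt.
Qed.

Lemma periodic_tail_sym : eventually_periodic x -> exists k, k != 0 /\ tail_sym (1%g, k).
Proof.
move=> /periodic_tail_match [N [M [hlt m]]]; exists (N%:Z - M%:Z); split.
  by rewrite subr_eq0 eqz_nat gtn_eqF.
by split; [exact: group1 | exists N, M; rewrite invg1].
Qed.

End TailSymmetries.

Section GermMap.
Variables (d : nat) (H : {group {perm 'I_d}}) (x : word d).
Hypothesis hd : 1 < d.
Implicit Types (g h : word d -> word d) (s : {perm 'I_d}) (p q : {perm 'I_d} * int).

Definition H_rep g (r : {perm 'I_d} * nat * nat) : Prop :=
  r.1.1 \in H /\ prefix_rep x g r.1.1 r.1.2 r.2.

Definition some_prefix_rep g : {perm 'I_d} * nat * nat :=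
  epsilon (inhabits (1%g, 0, 0)) (H_rep g).

Definition germ g : {perm 'I_d} * int :=
  let r := some_prefix_rep g in (r.1.1^-1%g, (r.1.2%:Z - r.2%:Z)%R).

Lemma germE g s N M : s \in H -> prefix_rep x g s N M -> germ g = (s^-1%g, (N%:Z - M%:Z)%R).
Proof.
move=> hs hr.
have [_ hr'] : H_rep g (some_prefix_rep g).
  exact: (epsilon_spec _ _ (ex_intro (H_rep g) (s, N, M) (conj hs hr))).
have [es eNM] := prefix_rep_unique hd hr' hr.
by rewrite /germ /= es; congr pair; move: eNM {hr hr'}; lia.
Qed.

Lemma germ_tail_sym g : inGamma H x g -> tail_sym H x (germ g).
Proof.
move=> hg; have [s [N [M [hs hr]]]] := inGamma_prefix_rep hg.
rewrite (germE hs hr); split; first by rewrite groupV.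
by exists N, M; rewrite invgK; split=> //; apply/(prefix_rep_fixP hr); case: hg.
Qed.

Lemma germ_onto p : tail_sym H x p -> exists g, inGamma H x g /\ germ g = p.
Proof.
case: p => t k [/= ht [N [M [-> m]]]]; have ht' : (t^-1)%g \in H by rewrite groupV.
have [g [hg hr]] := tail_match_realize hd ht' m.
by exists g; split=> //; rewrite (germE ht' hr) invgK; congr pair; lia.
Qed.

Lemma germ_mul g h : inGamma H x g -> inGamma H x h ->
  germ (fun y => g (h y)) = pair_mul (germ g) (germ h).
Proof.
move=> hg hh; have [sg [Ng [Mg [hsg rg]]]] := inGamma_prefix_rep hg.
have [sh [Nh [Mh [hsh rh]]]] := inGamma_prefix_rep hh.
have mg := (prefix_rep_fixP rg).1 hg.2; have mh := (prefix_rep_fixP rh).1 hh.2.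
have rgh := prefix_rep_comp rg mg rh mh.
rewrite (germE (groupM hsh hsg) rgh) (germE hsg rg) (germE hsh rh) /pair_mul /= invMg.
by congr pair; lia.
Qed.

Lemma germ_trivial g : inGamma H x g -> germ g = (1%g, 0%R) <-> inN H x g.
Proof.
move=> hg; rewrite inN_prefix_rep //; have [s [N [M [hs hr]]]] := inGamma_prefix_rep hg.
split=> [| [N' hr']]; last by rewrite (germE (group1 H) hr') invg1 subrr.
rewrite (germE hs hr) => -[/eqP]; rewrite invg_eq1 => /eqP es eNM.
have eN : N = M by move: eNM {hr}; lia.
by exists N; rewrite -es {2}eN.
Qed.

Lemma germ_iso_of (K : Type) (inK : K -> Prop) mul one (psi : {perm 'I_d} * int -> K) :
  (forall p, tail_sym H x p -> inK (psi p)) ->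
  (forall k, inK k -> exists2 p, tail_sym H x p & psi p = k) ->
  (forall p q, tail_sym H x p -> tail_sym H x q -> psi (pair_mul p q) = mul (psi p) (psi q)) ->
  (forall p, tail_sym H x p -> psi p = one <-> p = (1%g, 0%R)) ->
  germ_iso H x inK mul one.
Proof.
move=> psiK psi_onto psiM psi1; exists (fun g => psi (germ g)); split; [|split; [|split]].
- by move=> g hg; apply/psiK/germ_tail_sym.
- move=> k /psi_onto [p hp <-]; have [g [hg <-]] := germ_onto hp.
  by exists g.
- by move=> g h hg hh; rewrite germ_mul // psiM //; apply: germ_tail_sym.
- by move=> g hg; rewrite psi1 ?germ_trivial //; apply: germ_tail_sym.
Qed.

End GermMap.

Section IntegerSubgroups.
Local Open Scope ring_scope.

Lemma int_subgroup_cyclic (S : int -> Prop) k0 :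
  k0 != 0 -> S k0 -> (forall a b, S a -> S b -> S (a - b)) ->
  exists m : nat, [/\ (0 < m)%N, S m%:Z & forall k, S k -> (m%:Z %| k)%Z].
Proof.
move=> hk0 Sk0 SB.
have S0 : S 0 by rewrite -(subrr k0); apply: SB.
have SN : forall a, S a -> S (- a) by move=> a ha; rewrite -sub0r; apply: SB.
pose P n := if excluded_middle_informative ((0 < n)%N /\ S n%:Z) then true else false.
have PP : forall n, P n <-> (0 < n)%N /\ S n%:Z.
  by move=> n; rewrite /P; case: excluded_middle_informative => h; split.
have [n Pn] : exists n, P n.
  exists `|k0|%N; apply/PP; split; first by rewrite absz_gt0.
  by rewrite abszE; case: ger0P => _ //; apply: SN.
case: (ex_minnP (ex_intro P n Pn)) => m /PP [hm Sm] mmin.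
have Smul : forall j : int, S (j * m%:Z).
  have Snat : forall k : nat, S (k%:Z * m%:Z).
    elim=> [|k IH]; first by rewrite mul0r.
    by rewrite -[k.+1]addn1 PoszD mulrDl mul1r -[X in _ + X]opprK; apply: SB => //; apply: SN.
  by case=> k; rewrite ?NegzE ?mulNr; [apply: Snat | apply/SN/Snat].
exists m; split=> // k Sk; apply/dvdz_mod0P.
have hm' : m%:Z != 0 by rewrite eqz_nat -lt0n.
have r_ge0 := modz_ge0 k hm'.
have Sr : S (k %% m%:Z)%Z.
  have -> : (k %% m%:Z)%Z = k - (k %/ m%:Z)%Z * m%:Z.
    by rewrite {2}(divz_eq k m%:Z) addrAC subrr add0r.
  exact: SB.
case: (posnP `|(k %% m%:Z)%Z|%N) => [/eqP | hr]; first by rewrite absz_eq0 => /eqP.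
have := mmin _ (proj2 (PP _) (conj hr _)); rewrite gez0_abs // => /(_ Sr).
by rewrite leqNgt -ltz_nat gez0_abs // ltz_pmod.
Qed.

End IntegerSubgroups.

Section IntegerPowers.
Variable d : nat.
Local Open Scope ring_scope.
Implicit Types (s t h : {perm 'I_d}) (j : int).

Definition zpow s j : {perm 'I_d} := (s ^+ `|(j %% (#[s]%g)%:Z)%Z|%N)%g.

Lemma order_neq0 s : (#[s]%g)%:Z != 0.
Proof. by rewrite eqz_nat -lt0n order_gt0. Qed.

Lemma zpow_congr s (n : nat) j :
  (n%:Z %% (#[s]%g)%:Z = j %% (#[s]%g)%:Z)%Z -> zpow s j = (s ^+ n)%g.
Proof.
move=> h; rewrite /zpow -(expg_mod_order s n) -(expg_mod_order s `|_|%N).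
congr (_ ^+ _)%g; apply/eqP; rewrite -eqz_nat -!modz_nat.
by rewrite gez0_abs ?modz_ge0 ?order_neq0 // modz_mod h.
Qed.

Lemma zpow_nat s (n : nat) : zpow s n = (s ^+ n)%g.
Proof. exact: zpow_congr. Qed.

Lemma zpowD s (a b : int) : zpow s (a + b) = (zpow s a * zpow s b)%g.
Proof.
rewrite [zpow s a]/zpow [zpow s b]/zpow -expgD; apply: zpow_congr.
by rewrite PoszD !gez0_abs ?modz_ge0 ?order_neq0 // modzDm.
Qed.

Lemma zpow0 s : zpow s 0 = 1%g.
Proof. by rewrite zpow_nat expg0. Qed.

Lemma zpowN s (a : int) : zpow s (- a) = (zpow s a)^-1%g.
Proof. by apply: (@mulgI _ (zpow s a)); rewrite -zpowD subrr zpow0 mulgV. Qed.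

Lemma zact_conj s j h :
  zact (fun h => (h ^ s)%g) (fun h => (h ^ s^-1)%g) j h = (h ^ zpow s j)%g.
Proof.
case: j => n; rewrite /zact.
  rewrite zpow_nat; elim: n => [|n IH]; first by rewrite expg0 conjg1.
  by rewrite iterS IH expgSr conjgM.
rewrite NegzE zpowN zpow_nat -expVgn; elim: n.+1 => [|k IH]; first by rewrite expg0 conjg1.
by rewrite iterS IH expgSr conjgM.
Qed.

End IntegerPowers.

Section GermGroups.
Variables (d : nat) (H : {group {perm 'I_d}}) (x : word d).
Implicit Types (s t b : {perm 'I_d}) (p q : {perm 'I_d} * int).
Local Open Scope ring_scope.

Lemma tail_sym_zpow p j : tail_sym H x p -> tail_sym H x (zpow p.1 j, j * p.2).
Proof.
move=> hp; have hnat : forall n : nat, tail_sym H x (zpow p.1 n, n%:Z * p.2).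
  elim=> [|n IH]; first by rewrite zpow0 mul0r; apply: tail_sym_one.
  rewrite -addn1 PoszD zpowD (zpow_nat p.1 1) expg1 mulrDl mul1r.
  exact: tail_sym_mul IH hp.
case: j => n; first exact: hnat.
by rewrite NegzE mulNr zpowN; apply: (tail_sym_inv (hnat n.+1)).
Qed.

Lemma tail_sym_conj p t : tail_sym H x p -> inHx H x t -> inHx H x (t ^ p.1)%g.
Proof.
move=> hp /tail_sym0P ht; apply/tail_sym0P.
have := tail_sym_mul (tail_sym_mul (tail_sym_inv hp) ht) hp.
by rewrite /pair_mul /= addr0 addNr conjgE mulgA.
Qed.

Lemma conj_aut_Hx b k : tail_sym H x (b, k) ->
  is_aut_Hx H x (fun h => (h ^ b)%g) (fun h => (h ^ b^-1)%g).
Proof.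
move=> hb; have hbi := tail_sym_inv hb.
split; [|split; [|split; [|split]]] => h.
- exact: tail_sym_conj hb.
- exact: tail_sym_conj hbi.
- by move=> _; rewrite conjgKV.
- by move=> _; rewrite conjgK.
- by move=> k' _ _; rewrite conjMg.
Qed.

Lemma aperiodic_germ_iso : (1 < d)%N -> ~ eventually_periodic x ->
  germ_iso H x (inHx H x) (fun s t => (s * t)%g) 1%g.
Proof.
move=> hd hx; have shift0 : forall p, tail_sym H x p -> p.2 = 0 := fun p => tail_sym_aperiodic hx.
apply: (germ_iso_of hd (psi := fst)).
- by case=> t k hp; have /= k0 := shift0 _ hp; subst k; apply/tail_sym0P.
- by move=> t /tail_sym0P ht; exists (t, 0).
- by [].
- by case=> t k hp; have /= -> := shift0 _ hp; split=> [-> | []].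
Qed.

(* Semidirect decomposition: if m > 0 divides all shifts and (b, -m) is a
   tail symmetry, then (t, k) |-> (t b^(k/m), k/m) identifies the tail
   symmetries with H_x >< Z, Z acting by conjugation by b. *)
Lemma periodic_germ_iso b (m : nat) : (1 < d)%N -> (0 < m)%N -> tail_sym H x (b, - m%:Z) ->
  (forall p, tail_sym H x p -> (m%:Z %| p.2)%Z) ->
  germ_iso H x (fun p => inHx H x p.1)
    (sd_mul (fun h => (h ^ b)%g) (fun h => (h ^ b^-1)%g)) (1%g, 0).
Proof.
move=> hd hm hb hdiv; have hm0 : m%:Z != 0 by rewrite eqz_nat -lt0n.
have hpow : forall j, tail_sym H x (zpow b j, - (j * m%:Z)).
  by move=> j; have := tail_sym_zpow j hb; rewrite mulrN.
have hmul : forall t k, tail_sym H x (t, k) -> k = (k %/ m%:Z)%Z * m%:Z.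
  by move=> t k hp; rewrite divzK // (hdiv _ hp).
apply: (germ_iso_of hd (psi := fun p => ((p.1 * zpow b (p.2 %/ m%:Z)%Z)%g, (p.2 %/ m%:Z)%Z))).
- case=> t k hp /=; apply/tail_sym0P; have := tail_sym_mul hp (hpow (k %/ m%:Z)%Z).
  by rewrite /pair_mul /= -(hmul _ _ hp) subrr.
- case=> h j /= /tail_sym0P hh; exists ((h * zpow b (- j))%g, j * m%:Z).
    by have := tail_sym_mul hh (hpow (- j)); rewrite /pair_mul /= add0r mulNr opprK.
  by rewrite /= mulzK // -mulgA -zpowD addNr zpow0 mulg1.
- case=> t1 k1 [t2 k2] /hmul e1 /hmul e2; rewrite /pair_mul /sd_mul /= zact_conj.
  have -> : ((k1 + k2) %/ m%:Z)%Z = (k1 %/ m%:Z)%Z + (k2 %/ m%:Z)%Z.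
    by rewrite {1}e1 {1}e2 -mulrDl mulzK.
  congr pair.
  by rewrite conjgE !mulgA mulgK -!mulgA addrC zpowD.
- case=> t k /hmul e /=; split=> [[ht hj] | [-> ->]]; last by rewrite div0z zpow0 mulg1.
  by move: ht; rewrite hj zpow0 mulg1 e hj mul0r => ->.
Qed.

Lemma periodic_germ_group : (1 < d)%N -> eventually_periodic x ->
  exists alpha alphai : {perm 'I_d} -> {perm 'I_d},
    is_aut_Hx H x alpha alphai /\
    germ_iso H x (fun p : {perm 'I_d} * int => inHx H x p.1) (sd_mul alpha alphai) (1%g, 0).
Proof.
move=> hd hx; have [k0 [hk0 hsym0]] := periodic_tail_sym H hx.
have [m [hm [t ht] hdiv]] : exists m : nat, [/\ (0 < m)%N,
    exists t, tail_sym H x (t, m%:Z) & forall k, (exists t, tail_sym H x (t, k)) -> (m%:Z %| k)%Z].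
  apply: (int_subgroup_cyclic hk0); first by exists 1%g.
  move=> a c [ta ha] [tc hc]; exists (ta * tc^-1)%g.
  exact: (tail_sym_mul ha (tail_sym_inv hc)).
have hb := tail_sym_inv ht; rewrite /= in hb.
exists (fun h => (h ^ t^-1)%g), (fun h => (h ^ t^-1^-1)%g); split.
  exact: conj_aut_Hx hb.
by apply: (periodic_germ_iso hd hm hb) => -[s k] hp; apply: hdiv; exists s.
Qed.

End GermGroups.

Theorem corollary7p16 (d : nat) (H : {group {perm 'I_d}}) (x : word d) :
  2 <= d ->
  (~ eventually_periodic x ->
     germ_iso H x (inHx H x) (fun s t => (s * t)%g) 1%g) /\
  (eventually_periodic x ->
     exists alpha alphai : {perm 'I_d} -> {perm 'I_d},
       is_aut_Hx H x alpha alphai /\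
       germ_iso H x (fun p : {perm 'I_d} * int => inHx H x p.1)
                (sd_mul alpha alphai) (1%g, 0%R)).
Proof.
by move=> hd; split=> [|hx]; [exact: aperiodic_germ_iso | exact: periodic_germ_group].
Qed.
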